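(* Consider a tree power network $(\mathcal{V},\mathcal{E})$, $\mathcal{V}=\{1,\dots,n\}$, with fixed voltage magnitudes $|V_i|=\overline{V}_i>0$, angle limits $\underline{\theta}_{ik}\in[-\pi,0]$, $\overline{\theta}_{ik}\in[0,\pi]$ on each line, and bus power bounds $\underline{P}_i\le P_i\le\overline{P}_i$. Let $\mathcal{P}=\mathcal{P}_\theta\cap\mathcal{P}_P$ and suppose $\mathcal{P}\neq\emptyset$. Assume $$-\tan^{-1}\!\Big(\frac{b_{ik}}{g_{ik}}\Big)<\underline{\theta}_{ik}\le\overline{\theta}_{ik}<\tan^{-1}\!\Big(\frac{b_{ik}}{g_{ik}}\Big)\quad\text{for all }(i,k)\in\mathcal{E}.$$ Then: (1) for every $\mathbf{p}\in\mathcal{P}$ there exists a unique flow vector $\mathbf{f}\in\mathcal{F}_\theta$ with $\mathbf{A}\mathbf{f}=\mathbf{p}$; (2) $\mathcal{P}=\mathcal{O}(\mathcal{P})$; (3) $\mathcal{O}(\mathcal{P})=\mathcal{O}(\mathrm{conv}(\mathcal{P}))$.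
   Context: Each line $(i,k)\in\mathcal{E}$ has admittance $y_{ik}=g_{ik}-jb_{ik}$ with $g_{ik},b_{ik}\ge0$. For $\theta_{ik}=\theta_i-\theta_k$ (difference of bus voltage phases), the line flows are $P_{ik}=\overline{V}_i^2 g_{ik}+\overline{V}_i\overline{V}_k b_{ik}\sin\theta_{ik}-\overline{V}_i\overline{V}_k g_{ik}\cos\theta_{ik}$ and $P_{ki}=\overline{V}_k^2 g_{ik}-\overline{V}_i\overline{V}_k b_{ik}\sin\theta_{ik}-\overline{V}_i\overline{V}_k g_{ik}\cos\theta_{ik}$. The angle-constrained flow region of line $(i,k)$, $\mathcal{F}_{\theta_{ik}}\subset\mathbb{R}^2$, is the set of $(P_{ik},P_{ki})$ as $\theta_{ik}$ ranges over $[\underline{\theta}_{ik},\overline{\theta}_{ik}]$; $\mathcal{F}_\theta=\prod_{(i,k)\in\mathcal{E}}\mathcal{F}_{\theta_{ik}}\subset\mathbb{R}^{2|\mathcal{E}|}$. $\mathbf{A}$ is the $n\times2|\mathcal{E}|$ matrix with $A(i,(k,l))=1$ if $i=k$ and $0$ otherwise, so $(\mathbf{A}\mathbf{f})_i=\sum_{k\sim i}P_{ik}$ is the injection at bus $i$. $\mathcal{P}_\theta=\mathbf{A}\mathcal{F}_\theta$ and $\mathcal{P}_P=\{\mathbf{p}\in\mathbb{R}^n:\underline{P}_i\le P_i\le\overline{P}_i\ \forall i\}$. For $\mathcal{A}\subseteq\mathbb{R}^m$, $\mathcal{O}(\mathcal{A})$ is the set of Pareto-optimal points (points $x\in\mathcal{A}$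 such that no $y\in\mathcal{A}$ has $y\le x$ componentwise with strict inequality in some coordinate); $\mathrm{conv}$ denotes convex hull. *)

From HB Require Import structures.
From mathcomp Require Import all_boot all_order all_algebra.
From mathcomp Require Import all_classical all_reals all_analysis.
Set Implicit Arguments. Unset Strict Implicit. Unset Printing Implicit Defensive.
Import Order.TTheory GRing.Theory Num.Theory.
Local Open Scope ring_scope.
Local Open Scope classical_set_scope.

(* Buses are 'I_n; lines are 'I_m; line e joins (ends e).1 = i to
   (ends e).2 = k, i.e. it is the element (i,k) of E. *)

Section Graph.
Variables (n m : nat) (ends : 'I_m -> 'I_n * 'I_n).

Fixpoint trail (v : 'I_n) (es : seq 'I_m) (w : 'I_n) : Prop :=
  match es with
  | [::] => v = w
  | e :: es' => exists v' : 'I_n,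
      (ends e = (v, v') \/ ends e = (v', v)) /\ trail v' es' w
  end.

Definition connected_net : Prop := forall v w : 'I_n, exists es, trail v es w.

Definition acyclic_net : Prop :=
  forall (v : 'I_n) (es : seq 'I_m), es <> [::] -> uniq es -> ~ trail v es v.

Definition is_tree : Prop := connected_net /\ acyclic_net.
End Graph.

Section Flows.
Variable R : realType.

Definition Pik (Vi Vk g b th : R) : R :=
  Vi ^+ 2 * g + Vi * Vk * b * sin th - Vi * Vk * g * cos th.
Definition Pki (Vi Vk g b th : R) : R :=
  Vk ^+ 2 * g - Vi * Vk * b * sin th - Vi * Vk * g * cos th.

(* tan^{-1}(b/g), read as the angle of the point (g,b) (atan2 convention),
   so that g = 0, b > 0 gives pi/2. *)
Definition crit_angle (g b : R) : R :=
  if 0 < g then atan (b / g) else if 0 < b then pi / 2 else 0.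

Variables (n m : nat) (ends : 'I_m -> 'I_n * 'I_n).
Variables (V : 'I_n -> R) (g b lo hi : 'I_m -> R).

Definition line_flow (e : 'I_m) (th : R) : R * R :=
  (Pik (V (ends e).1) (V (ends e).2) (g e) (b e) th,
   Pki (V (ends e).1) (V (ends e).2) (g e) (b e) th).

Definition flow_region (e : 'I_m) : set (R * R) :=
  fun z => exists th : R, lo e <= th <= hi e /\ z = line_flow e th.

(* a flow vector f in R^{2|E|}: f e = (P_ik, P_ki) for e = (i,k) *)
Definition F_theta : set ('I_m -> R * R) :=
  fun f => forall e, flow_region e (f e).

Definition injection (f : 'I_m -> R * R) : 'I_n -> R :=
  fun i => \sum_(e < m | (ends e).1 == i) (f e).1
         + \sum_(e < m | (ends e).2 == i) (f e).2.

Definition P_theta : set ('I_n -> R) :=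
  fun p => exists f, F_theta f /\ injection f = p.
End Flows.

Definition P_box (R : realType) (n : nat) (Plo Phi : 'I_n -> R) : set ('I_n -> R) :=
  fun p => forall i, Plo i <= p i <= Phi i.

Definition pareto_set (R : realType) (n : nat) (A : set ('I_n -> R)) : set ('I_n -> R) :=
  fun x => A x /\ ~ (exists y, A y /\ (forall j, y j <= x j) /\ exists j, y j < x j).

Definition conv_hull (R : realType) (n : nat) (A : set ('I_n -> R)) : set ('I_n -> R) :=
  fun x => exists (k : nat) (w : 'I_k -> R) (xs : 'I_k -> 'I_n -> R),
    (forall i, 0 <= w i) /\ \sum_(i < k) w i = 1 /\ (forall i, A (xs i)) /\
    x = (fun j => \sum_(i < k) w i * xs i j).

From HB Require Import structures.
From mathcomp Require Import all_boot all_order all_algebra.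
From mathcomp Require Import all_classical all_reals all_analysis.
From mathcomp Require Import ring lra.
Import Order.TTheory GRing.Theory Num.Theory numFieldNormedType.Exports.
Set Implicit Arguments. Unset Strict Implicit. Unset Printing Implicit Defensive.
Local Open Scope ring_scope.
Local Open Scope classical_set_scope.

(* In the angle window, the flow curve [x |-> (P_ik x, P_ki x)] of a line is
   strictly increasing in its first and strictly decreasing in its second
   coordinate, and lies on one side of a line with positive normal through
   each of its points; hence a convex combination of points of the curve
   dominates the point of the curve with the same first coordinate.
   On a tree, remove a leaf line: the injection at the leaf bus is a monotone
   function of that line's angle alone. Induction over leaves then shows that
   comparable points of [P_theta] come from the same angles, so [P] is an
   antichain, flows are unique and [P = O(P)]; and, choosing at each leaf line
   the angle whose leaf injection is the averaged one, that every point of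
   [conv P] dominates a point of [P], whence [O(conv P) = P]. *)

Section LineFlow.
Variable R : realType.
Implicit Types Vi Vk g b x y : R.

Lemma crit_angle_le_pi2 g b : crit_angle g b <= pi / 2.
Proof.
rewrite /crit_angle; case: ifP => _; first exact/ltW/atan_ltpi2.
by case: ifP => _ //; rewrite divr_ge0 ?pi_ge0.
Qed.

(* [V_i V_k (b cos x + g sin x)] and [V_i V_k (b cos x - g sin x)] are
   [d P_ik / dx] and [- d P_ki / dx]. *)
Lemma flow_slopes_gt0 g b x : 0 <= g -> 0 <= b ->
  - crit_angle g b < x < crit_angle g b ->
  0 < b * cos x + g * sin x /\ 0 < b * cos x - g * sin x.
Proof.
move=> g0 b0; rewrite /crit_angle; case: ifP => [gp|gn].
  set a := atan (b / g) => /andP[xa ax].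
  have a_gt := atan_gtNpi2 (b / g); have a_lt := atan_ltpi2 (b / g).
  rewrite -/a in a_gt a_lt.
  have cos_a : 0 < cos a by apply: cos_gt0_pihalf; rewrite a_gt a_lt.
  have gsin_a : g * sin a = b * cos a.
    have : tan a = b / g by rewrite /a atanK.
    rewrite /tan => /(congr1 (fun t => g * t * cos a)).
    by rewrite mulrA divfK ?gt_eqF // mulrCA divff ?gt_eqF ?mulr1.
  have pi_gt0 : 0 < pi :> R := pi_gt0 R.
  have sinD_gt0 : 0 < sin (a + x) by apply: sin_gt0_pi; apply/andP; split; lra.
  have sinB_gt0 : 0 < sin (a - x) by apply: sin_gt0_pi; apply/andP; split; lra.
  rewrite sinD in sinD_gt0; rewrite sinB in sinB_gt0.
  have := mulr_gt0 gp sinD_gt0; have := mulr_gt0 gp sinB_gt0.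
  rewrite !mulrDr !mulrN !mulrA gsin_a; nra.
case: ifP => bp /andP[xa ax]; last lra.
have -> : g = 0 by apply/eqP; rewrite eq_le g0 andbT leNgt gn.
rewrite !mul0r addr0 subr0.
have cos_x : 0 < cos x by apply: cos_gt0_pihalf; rewrite xa ax.
by split; apply: mulr_gt0.
Qed.

Lemma line_flow_strict_mono Vi Vk g b x y :
  0 < Vi -> 0 < Vk -> 0 <= g -> 0 <= b ->
  - crit_angle g b < x -> x < y -> y < crit_angle g b ->
  Pik Vi Vk g b x < Pik Vi Vk g b y /\ Pki Vi Vk g b y < Pki Vi Vk g b x.
Proof.
move=> Vi0 Vk0 g0 b0 hx xy hy.
(* [P_ik (mid + d) - P_ik (mid - d) = 2 V_i V_k sin d (b cos mid + g sin mid)],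
   and similarly for [P_ki]. *)
set mid := (x + y) / 2; set d := (y - x) / 2.
have -> : x = mid - d by rewrite /mid /d; field.
have -> : y = mid + d by rewrite /mid /d; field.
have crit_le := crit_angle_le_pi2 g b.
have [s1 s2] := @flow_slopes_gt0 g b mid g0 b0
  (ltac:(apply/andP; split; rewrite /mid; lra)).
have sin_d : 0 < sin d by apply: sin_gt0_pihalf; apply/andP; split; rewrite /d; lra.
have VV : 0 < 2 * (Vi * Vk) * sin d by rewrite !mulr_gt0.
have := mulr_gt0 VV s1; have := mulr_gt0 VV s2.
rewrite /Pik /Pki sinB cosB sinD cosD => q2 q1; split; lra.
Qed.

(* The normal [(b cos xb - g sin xb, b cos xb + g sin xb)] is orthogonal to
   the tangent at [xb]; the left-hand side equals
   [2 V_i V_k b g (1 - cos (x - xb))]. *)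
Lemma line_flow_supporting_line Vi Vk g b x xb :
  0 < Vi -> 0 < Vk -> 0 <= g -> 0 <= b ->
  0 <= (b * cos xb - g * sin xb) * (Pik Vi Vk g b x - Pik Vi Vk g b xb) +
       (b * cos xb + g * sin xb) * (Pki Vi Vk g b x - Pki Vi Vk g b xb).
Proof.
move=> Vi0 Vk0 g0 b0.
have -> : (b * cos xb - g * sin xb) * (Pik Vi Vk g b x - Pik Vi Vk g b xb) +
          (b * cos xb + g * sin xb) * (Pki Vi Vk g b x - Pki Vi Vk g b xb) =
          2 * (Vi * Vk) * (b * g) * (cos xb ^+ 2 + sin xb ^+ 2 - cos (x - xb)).
  by rewrite /Pik /Pki cosB; ring.
rewrite cos2Dsin2 mulr_ge0 ?subr_ge0 ?cos_le1 //.
by rewrite !mulr_ge0 // ltW.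
Qed.

Lemma continuous_Pik Vi Vk g b : continuous (Pik Vi Vk g b).
Proof.
have -> : Pik Vi Vk g b = cst (Vi ^+ 2 * g) + cst (Vi * Vk * b) \* sin
                          - cst (Vi * Vk * g) \* cos by [].
move=> x; apply: continuousB; first apply: continuousD.
- exact: cst_continuous.
- by apply: continuousM; [exact: cst_continuous | exact: continuous_sin].
- by apply: continuousM; [exact: cst_continuous | exact: continuous_cos].
Qed.

Lemma continuous_Pki Vi Vk g b : continuous (Pki Vi Vk g b).
Proof.
have -> : Pki Vi Vk g b = cst (Vk ^+ 2 * g) - cst (Vi * Vk * b) \* sin
                          - cst (Vi * Vk * g) \* cos by [].
move=> x; apply: continuousB; first apply: continuousB.
- exact: cst_continuous.
- by apply: continuousM; [exact: cst_continuous | exact: continuous_sin].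
- by apply: continuousM; [exact: cst_continuous | exact: continuous_cos].
Qed.

End LineFlow.

Section ConvexCombination.
Variables (R : realType) (k : nat) (w : 'I_k -> R).
Hypotheses (w_ge0 : forall j, 0 <= w j) (w_sum1 : \sum_(j < k) w j = 1).

Lemma weights_nonempty : (0 < k)%N.
Proof. by case: k w w_sum1 => // ?; rewrite big_ord0 => /eqP; rewrite eq_sym oner_eq0. Qed.

Lemma convex_comb_ge (f : 'I_k -> R) a :
  (forall j, a <= f j) -> a <= \sum_(j < k) w j * f j.
Proof.
move=> af; rewrite -[a]mul1r -w_sum1 mulr_suml.
by apply: ler_sum => j _; exact: ler_wpM2l.
Qed.

Lemma convex_comb_le (f : 'I_k -> R) a :
  (forall j, f j <= a) -> \sum_(j < k) w j * f j <= a.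
Proof.
move=> fa; rewrite -[a]mul1r -w_sum1 mulr_suml.
by apply: ler_sum => j _; exact: ler_wpM2l.
Qed.

Lemma convex_combB (f h : 'I_k -> R) :
  \sum_(j < k) w j * (f j - h j) =
  \sum_(j < k) w j * f j - \sum_(j < k) w j * h j.
Proof. by rewrite -sumrB; apply: eq_bigr => j _; rewrite mulrBr. Qed.

Lemma convex_comb_affine (f h : 'I_k -> R) N D p q :
  \sum_(j < k) w j * (N * (f j - p) + D * (h j - q)) =
  N * (\sum_(j < k) w j * f j - p) + D * (\sum_(j < k) w j * h j - q).
Proof.
rewrite (eq_bigr (fun j => N * (w j * f j) + D * (w j * h j)
                           - (N * p + D * q) * w j)); last by move=> j _; ring.
by rewrite sumrB big_split /= -!mulr_sumr w_sum1; ring.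
Qed.

End ConvexCombination.

Lemma IVT_in (R : realType) (lo hi : R) (f : R -> R) a b v : continuous f ->
  a \in `[lo, hi]%R -> b \in `[lo, hi]%R -> f a <= v <= f b ->
  exists2 x, x \in `[lo, hi]%R & f x = v.
Proof.
move=> fc; rewrite !in_itv /= => /andP[la ah] /andP[lb bh] /andP[av vb].
have fc_in (u u' : R) : {within `[u, u'], continuous f} by exact: continuous_subspaceT.
have [ab|ba] := leP a b.
  have [|x] := @IVT _ f a b v ab (fc_in a b); first by rewrite ge_min av le_max vb orbT.
  by rewrite in_itv /= => /andP[ax xb] <-; exists x; rewrite // in_itv /=;
    apply/andP; split; lra.
have [|x] := @IVT _ f b a v (ltW ba) (fc_in b a); first by rewrite ge_min av orbT le_max vb.
by rewrite in_itv /= => /andP[ax xb] <-; exists x; rewrite // in_itv /=;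
  apply/andP; split; lra.
Qed.

Section TradeoffCurve.
Variables (R : realType) (lo hi : R).
Local Notation I := `[lo, hi]%R.

(* The last clause asks for a supporting line with positive normal [(N, D)]
   at every point of the curve [x |-> (c x, d x)]. *)
Definition tradeoff_curve (c d : R -> R) : Prop :=
  [/\ continuous c, continuous d,
      {in I &, {mono c : x y / x <= y}} /\ {in I &, {mono d : x y /~ x <= y}} \/
      {in I &, {mono c : x y /~ x <= y}} /\ {in I &, {mono d : x y / x <= y}}
    & forall xb, xb \in I -> exists2 N, 0 < N & exists2 D, 0 < D &
        {in I, forall x, 0 <= N * (c x - c xb) + D * (d x - d xb)}].

Variables c d : R -> R.
Hypothesis cd : tradeoff_curve c d.

Lemma tradeoff_sym : tradeoff_curve d c.
Proof.
case: cd => cc dc mono sup; split => //; first by case: mono => -[]; [right|left].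
move=> xb /sup [N N0 [D D0 h]]; exists D => //; exists N => // x /h.
by rewrite addrC.
Qed.

Lemma tradeoff_anti x y : x \in I -> y \in I -> c x <= c y -> d y <= d x.
Proof.
by case: cd => _ _ [] [mc md] _ xI yI; rewrite mc ?md.
Qed.

Lemma tradeoff_anti_sym x y : x \in I -> y \in I -> d x <= d y -> c y <= c x.
Proof.
by case: cd => _ _ [] [mc md] _ xI yI; rewrite md ?mc.
Qed.

Lemma tradeoff_le_eq x y : x \in I -> y \in I -> c x <= c y -> d x <= d y -> x = y.
Proof.
by case: cd => _ _ [] [mc md] _ xI yI; rewrite mc ?md // => ? ?; apply/eqP;
  rewrite eq_le; apply/andP.
Qed.

Lemma tradeoff_average k (w : 'I_k -> R) (xs : 'I_k -> R) :
  (forall j, 0 <= w j) -> \sum_(j < k) w j = 1 -> (forall j, xs j \in I) ->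
  exists2 xb, xb \in I & c xb = \sum_(j < k) w j * c (xs j) /\
                         d xb <= \sum_(j < k) w j * d (xs j).
Proof.
move=> w0 w1 xsI; pose j0 : 'I_k := Ordinal (weights_nonempty w1).
have [jm _ c_min] := @arg_minP _ _ _ j0 xpredT (fun j => c (xs j)) isT.
have [jM _ c_max] := @arg_maxP _ _ _ j0 xpredT (fun j => c (xs j)) isT.
have [xb xbI cxb] : exists2 xb, xb \in I & c xb = \sum_(j < k) w j * c (xs j).
  apply: (IVT_in _ (xsI jm) (xsI jM)); first by case: cd.
  by rewrite convex_comb_ge ?convex_comb_le // => j; [exact: c_max | exact: c_min].
exists xb => //; split => //.
case: cd => _ _ _ /(_ xb xbI) [N N0 [D D0 sup]].
have : 0 <= \sum_(j < k) w j * (N * (c (xs j) - c xb) + D * (d (xs j) - d xb)).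
  by apply: sumr_ge0 => j _; rewrite mulr_ge0 ?sup.
by rewrite (convex_comb_affine w1) -cxb subrr mulr0 add0r pmulr_rge0 // subr_ge0.
Qed.

Lemma tradeoff_window a b low up : a \in I -> b \in I -> c a <= c b ->
  low <= d a -> d b <= up -> low <= up ->
  exists2 x, x \in I & c a <= c x <= c b /\ low <= d x <= up.
Proof.
move=> aI bI cab lda dbu lu; have dba := tradeoff_anti aI bI cab.
have [ldb|dbl] := leP low (d b); first by exists b; rewrite // cab lexx ldb dbu.
have [x xI dx] : exists2 x, x \in I & d x = low.
  by apply: (IVT_in _ bI aI); [case: cd | rewrite (ltW dbl) lda].
exists x => //; rewrite dx lexx lu; split => //.
by rewrite (tradeoff_anti_sym xI aI) ?dx // (tradeoff_anti_sym bI xI) ?dx // ltW.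
Qed.

End TradeoffCurve.

Lemma line_flow_tradeoff (R : realType) (Vi Vk g b lo hi : R) :
  0 < Vi -> 0 < Vk -> 0 <= g -> 0 <= b ->
  - crit_angle g b < lo -> hi < crit_angle g b ->
  tradeoff_curve lo hi (Pik Vi Vk g b) (Pki Vi Vk g b).
Proof.
move=> Vi0 Vk0 g0 b0 clo hic.
have inI x : x \in `[lo, hi]%R -> - crit_angle g b < x < crit_angle g b.
  by rewrite in_itv /= => /andP[? ?]; apply/andP; split; lra.
have mono x y : x \in `[lo, hi]%R -> y \in `[lo, hi]%R -> x < y ->
    Pik Vi Vk g b x < Pik Vi Vk g b y /\ Pki Vi Vk g b y < Pki Vi Vk g b x.
  move=> /inI/andP[cx _] /inI/andP[_ yc] xy.
  exact: line_flow_strict_mono.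
split; [exact: continuous_Pik | exact: continuous_Pki | left; split | ].
- by apply: le_mono_in => x y xI yI /(mono _ _ xI yI) [].
- by apply: le_nmono_in => x y xI yI /(mono _ _ yI xI) [].
move=> xb /inI /(flow_slopes_gt0 g0 b0) [s1 s2].
exists (b * cos xb - g * sin xb) => //; exists (b * cos xb + g * sin xb) => // x _.
exact: line_flow_supporting_line.
Qed.

Section Forest.
Variables (n m : nat) (ends : 'I_m -> 'I_n * 'I_n).
Hypothesis acyclic : acyclic_net ends.
Implicit Types (E : {set 'I_m}) (e : 'I_m) (v w x l k : 'I_n).

Definition joins e v w : Prop := ends e = (v, w) \/ ends e = (w, v).

Definition leaf_edge E e l k : Prop :=
  [/\ e \in E, joins e l k &
      forall e', e' \in E -> (ends e').1 = l \/ (ends e').2 = l -> e' = e].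

Lemma joins_neq e v w : joins e v w -> v != w.
Proof.
move=> j; apply/eqP => vw; subst w.
have := acyclic (v := v) (es := [:: e]); apply => //=.
by exists v; split; first by case: j; left.
Qed.

Fixpoint walk_in E v (ps : seq ('I_m * 'I_n)) : Prop :=
  if ps is (e, w) :: ps' then [/\ e \in E, joins e v w & walk_in E w ps'] else True.

Lemma walk_in_ends E v ps e : walk_in E v ps -> e \in map fst ps ->
  (ends e).1 \in v :: map snd ps /\ (ends e).2 \in v :: map snd ps.
Proof.
elim: ps v => [|[e1 w] ps IH] v //= [_ j1 walk].
rewrite inE => /orP[/eqP->|/(IH _ walk)[]].
  by case: j1 => ->; rewrite /= !inE !eqxx ?orbT.
by rewrite !inE => -> ->; rewrite !orbT.
Qed.

Lemma walk_in_trail E v ps x : walk_in E v ps -> x \in v :: map snd ps ->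
  exists i, trail ends v (take i (map fst ps)) x.
Proof.
elim: ps v => [|[e w] ps IH] v /=; first by move=> _; rewrite inE => /eqP->; exists 0%N.
move=> [_ j walk]; rewrite inE => /orP[/eqP->|/(IH _ walk)[i tr]]; first by exists 0%N.
by exists i.+1; exists w.
Qed.

Lemma walk_in_uniq E v ps : walk_in E v ps -> uniq (v :: map snd ps) ->
  uniq (map fst ps).
Proof.
elim: ps v => [|[e w] ps IH] v //= [_ j walk] /andP[vps wps].
rewrite (IH _ walk wps) andbT; apply/negP => /(walk_in_ends walk) [].
by case: j => -> /= ve we; rewrite ?ve ?we in vps.
Qed.

Lemma walk_in_extend E v e1 v1 ps e x :
  walk_in E v ((e1, v1) :: ps) -> uniq (v :: v1 :: map snd ps) ->
  joins e x v -> e != e1 -> x \notin v :: v1 :: map snd ps.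
Proof.
move=> walk vs_uniq je ee1; apply/negP => /(walk_in_trail walk) [i tr].
have := acyclic (v := x) (es := e :: take i (e1 :: map fst ps)); apply => //=.
  rewrite take_uniq ?(walk_in_uniq walk) // andbT.
  apply/negP => /mem_take; rewrite inE (negbTE ee1) /=.
  case: walk => _ _ /walk_in_ends/[apply] -[].
  by move: vs_uniq => /andP[/negP vn _]; case: je => -> /= ? ?; apply: vn.
by exists v.
Qed.

(* Without a leaf every simple walk extends at its head, which is impossible
   beyond [n] vertices. *)
Lemma leaf_edge_exists E : E != finset.set0 -> exists l k e, leaf_edge E e l k.
Proof.
move=> /set0Pn [e0 e0E]; apply: contrapT => noleaf.
suff long L : exists v ps, [/\ walk_in E v ps, uniq (v :: map snd ps) & size ps = L.+1].
  have [v [ps [_ vs_uniq ps_size]]] := long n.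
  have := uniq_leq_size vs_uniq (fun x _ => mem_enum 'I_n x).
  by rewrite size_enum_ord /= size_map ps_size ltnNge leqnSn.
elim: L => [|L [v [ps' [+ + ps_size]]]].
  have j0 : joins e0 (ends e0).1 (ends e0).2 by left; exact: surjective_pairing.
  exists (ends e0).1, [:: (e0, (ends e0).2)]; split => //=.
  by rewrite inE andbT (joins_neq j0).
case: ps' ps_size => [//|[e1 v1] ps] ps_size walk vs_uniq.
have [e [eE ev ee1]] : exists e, [/\ e \in E, (ends e).1 = v \/ (ends e).2 = v & e != e1].
  apply: contrapT => none; apply: noleaf; exists v, v1, e1.
  case: walk => e1E j1 _; split => // e eE ev; apply/eqP; apply: contrapT => ee1.
  by apply: none; exists e; split => //; apply/negP.
have [x je] : exists x, joins e x v.
  case: ev => <-; [exists (ends e).2; right | exists (ends e).1; left];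
    exact: surjective_pairing.
exists x, ((e, v) :: (e1, v1) :: ps); split => //=; last by move: ps_size => /= [->].
by rewrite (walk_in_extend walk vs_uniq je ee1).
Qed.

Lemma leaf_edge_neq E e l k : leaf_edge E e l k -> l != k.
Proof. by case=> _ /joins_neq. Qed.

Lemma leaf_edge_ind (Q : {set 'I_m} -> Prop) : Q finset.set0 ->
  (forall E e l k, leaf_edge E e l k -> Q (E :\ e) -> Q E) -> forall E, Q E.
Proof.
move=> Q0 Qleaf E; move: {2}#|E| (erefl #|E|) => N.
elim: N E => [|N IH] E EN; first by rewrite (cards0_eq EN).
have [|l [k [e leaf]]] := @leaf_edge_exists E; first by rewrite -card_gt0 EN.
apply: (Qleaf _ _ _ _ leaf); apply: IH.
by move: EN; case: leaf => eE _ _; rewrite (cardsD1 e) eE => -[].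
Qed.

End Forest.

Section PartialInjection.
Variables (R : realType) (n m : nat) (ends : 'I_m -> 'I_n * 'I_n).
Variables (flow : 'I_m -> R -> R * R) (lo hi : 'I_m -> R).
Implicit Types (E : {set 'I_m}) (e : 'I_m) (th : 'I_m -> R) (v l k : 'I_n).

Definition line_injection e x v : R :=
  (if (ends e).1 == v then (flow e x).1 else 0) +
  (if (ends e).2 == v then (flow e x).2 else 0).

Definition partial_injection E th v : R := \sum_(e in E) line_injection e (th e) v.

Definition admissible th : Prop := forall e, th e \in `[lo e, hi e]%R.

Lemma partial_injection0 th v : partial_injection finset.set0 th v = 0.
Proof. exact: big_set0. Qed.

Lemma partial_injectionD1 E e th v : e \in E ->
  partial_injection E th v = line_injection e (th e) v + partial_injection (E :\ e) th v.
Proof. exact: big_setD1. Qed.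

Lemma eq_partial_injection E th th' : {in E, th =1 th'} ->
  partial_injection E th =1 partial_injection E th'.
Proof. by move=> eq_th v; apply: eq_bigr => e /eq_th ->. Qed.

Lemma partial_injection_leaf E e l k th : leaf_edge ends E e l k ->
  partial_injection (E :\ e) th l = 0.
Proof.
case=> _ _ only_e; apply: big1 => e'; rewrite !inE => /andP[e'e e'E].
have e'_off : ~ ((ends e').1 = l \/ (ends e').2 = l).
  by move/(only_e _ e'E)/eqP; rewrite (negbTE e'e).
rewrite /line_injection; case: eqP => [?|_]; first by case: e'_off; left.
by case: eqP => [?|_]; [case: e'_off; right | rewrite addr0].
Qed.

Lemma line_injection_other e l k x v : joins ends e l k -> v != l -> v != k ->
  line_injection e x v = 0.
Proof.
by rewrite /line_injection => -[]-> /= /negbTE vl /negbTE vk;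
  rewrite ![_ == v]eq_sym vl vk addr0.
Qed.

Lemma leaf_line_tradeoff e l k : joins ends e l k -> l != k ->
  tradeoff_curve (lo e) (hi e) (fun x => (flow e x).1) (fun x => (flow e x).2) ->
  tradeoff_curve (lo e) (hi e) (line_injection e ^~ l) (line_injection e ^~ k).
Proof.
rewrite /line_injection => -[]-> /= lk; rewrite !eqxx (negbTE lk) eq_sym (negbTE lk).
  by rewrite (funext (fun x => addr0 (flow e x).1)) (funext (fun x => add0r (flow e x).2)).
move/tradeoff_sym.
by rewrite (funext (fun x => add0r (flow e x).2)) (funext (fun x => addr0 (flow e x).1)).
Qed.

Hypothesis acyclic : acyclic_net ends.
Hypothesis line_tradeoff : forall e,
  tradeoff_curve (lo e) (hi e) (fun x => (flow e x).1) (fun x => (flow e x).2).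

Lemma partial_injection_le_eq E th th' : admissible th -> admissible th' ->
  (forall v, partial_injection E th' v <= partial_injection E th v) ->
  {in E, th' =1 th}.
Proof.
move: E th th'; apply: (leaf_edge_ind acyclic) => [|E e l k leaf IH] th th' thI th'I le.
  by move=> e; rewrite inE.
have lk := leaf_edge_neq acyclic leaf; case: (leaf) => eE jlk _.
have cd := leaf_line_tradeoff jlk lk (line_tradeoff e).
have c_le : line_injection e (th' e) l <= line_injection e (th e) l.
  move: (le l); rewrite !(partial_injectionD1 _ _ eE).
  by rewrite !(partial_injection_leaf _ leaf) !addr0.
have d_le := tradeoff_anti cd (th'I e) (thI e) c_le.
have rest : {in E :\ e, th' =1 th}.
  apply: IH => // v; move: (le v); rewrite !(partial_injectionD1 _ _ eE).
  have [->|vl] := eqVneq v l; first by rewrite !(partial_injection_leaf _ leaf).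
  have [->|vk] := eqVneq v k; first by lra.
  by rewrite !(line_injection_other _ jlk vl vk) !add0r.
have th'_e : th' e = th e.
  apply: (tradeoff_le_eq cd (th'I e) (thI e) c_le).
  by move: (le k); rewrite !(partial_injectionD1 _ _ eE) (eq_partial_injection rest); lra.
by move=> e' e'E; have [->//|e'e] := eqVneq e' e; apply: rest; rewrite !inE e'e.
Qed.

Section Sandwich.
Variables (k : nat) (w : 'I_k -> R) (ths : 'I_k -> 'I_m -> R).
Hypotheses (w_ge0 : forall j, 0 <= w j) (w_sum1 : \sum_(j < k) w j = 1).
Hypothesis ths_adm : forall j, admissible (ths j).

Let sandwiched E : Prop := forall L U : 'I_n -> R,
  (forall j v, L v <= partial_injection E (ths j) v) ->
  (forall v, \sum_(j < k) w j * partial_injection E (ths j) v <= U v) ->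
  exists2 th, admissible th & forall v, L v <= partial_injection E th v <= U v.

Let sandwiched0 : sandwiched finset.set0.
Proof.
move=> L U L_le le_U; pose j0 : 'I_k := Ordinal (weights_nonempty w_sum1).
exists (ths j0) => // v; move: (L_le j0 v) (le_U v).
rewrite big1 => [|j _]; last by rewrite partial_injection0 mulr0.
by rewrite !partial_injection0 => -> ->.
Qed.

Section LeafStep.
Variables (E : {set 'I_m}) (e : 'I_m) (l kk : 'I_n).
Hypothesis leaf : leaf_edge ends E e l kk.

Let c := line_injection e ^~ l.
Let d := line_injection e ^~ kk.
Let eE : e \in E. Proof. by case: leaf. Qed.
Let jlk : joins ends e l kk. Proof. by case: leaf. Qed.
Let cd : tradeoff_curve (lo e) (hi e) c d.
Proof. exact: leaf_line_tradeoff jlk (leaf_edge_neq acyclic leaf) (line_tradeoff e). Qed.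

Let P_l th : partial_injection E th l = c (th e).
Proof. by rewrite (partial_injectionD1 _ _ eE) (partial_injection_leaf _ leaf) addr0. Qed.

Let P_k th : partial_injection E th kk = d (th e) + partial_injection (E :\ e) th kk.
Proof. exact: partial_injectionD1. Qed.

Let P_off th v : v != l -> v != kk ->
  partial_injection E th v = partial_injection (E :\ e) th v.
Proof.
move=> vl vk; rewrite (partial_injectionD1 _ _ eE).
by rewrite (line_injection_other _ jlk vl vk) add0r.
Qed.

(* The bounds for the remaining lines are shifted by the injections of two
   angles of the leaf line: [ths jm e], minimising the leaf injection, and [xb],
   whose leaf injection is the averaged one and whose injection at [kk] is at
   most the average by the supporting line. *)
Let shifted_bounds (L U : 'I_n -> R) jm xb :
  (forall j v, L v <= partial_injection E (ths j) v) ->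
  (forall v, \sum_(j < k) w j * partial_injection E (ths j) v <= U v) ->
  (forall j, c (ths jm e) <= c (ths j e)) ->
  c xb = \sum_(j < k) w j * c (ths j e) -> d xb <= \sum_(j < k) w j * d (ths j e) ->
  (forall j v, L v - line_injection e (ths jm e) v <=
               partial_injection (E :\ e) (ths j) v) /\
  (forall v, \sum_(j < k) w j * partial_injection (E :\ e) (ths j) v <=
             U v - line_injection e xb v).
Proof.
move=> L_le le_U c_min c_xb d_xb; split=> [j v|v].
- have [->|vl] := eqVneq v l.
    by rewrite (partial_injection_leaf _ leaf) -/(c (ths jm e)) subr_le0 -P_l.
  have [->|vk] := eqVneq v kk.
    rewrite -/(d (ths jm e)); have := L_le j kk; rewrite P_k.
    have := tradeoff_anti cd (ths_adm jm e) (ths_adm j e) (c_min j); lra.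
  by rewrite (line_injection_other _ jlk vl vk) subr0 -P_off //; apply: L_le.
- have [->|vl] := eqVneq v l.
    rewrite -/(c xb) big1 => [|j _]; last by rewrite (partial_injection_leaf _ leaf) mulr0.
    by rewrite subr_ge0 c_xb; move: (le_U l); under eq_bigr do rewrite P_l.
  have [->|vk] := eqVneq v kk.
    rewrite -/(d xb) (eq_bigr (fun j =>
      w j * (partial_injection E (ths j) kk - d (ths j e)))).
      by rewrite convex_combB; have := le_U kk; lra.
    by move=> j _; rewrite P_k addrAC subrr add0r.
  rewrite (line_injection_other _ jlk vl vk) subr0.
  by under eq_bigr do rewrite -(P_off _ vl vk); apply: le_U.
Qed.

(* An angle between [ths jm e] and [xb] fits the bounds at [l] and those left
   at [kk]. *)
Lemma sandwiched_leaf : sandwiched (E :\ e) -> sandwiched E.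
Proof.
move=> IH L U L_le le_U; pose j0 : 'I_k := Ordinal (weights_nonempty w_sum1).
have [jm _ c_min] := @arg_minP _ _ _ j0 xpredT (fun j => c (ths j e)) isT.
have [xb xbI [c_xb d_xb]] := tradeoff_average cd w_ge0 w_sum1 (fun j => ths_adm j e).
have [L'_le le_U'] := shifted_bounds L_le le_U (fun j => c_min j isT) c_xb d_xb.
have [th' th'I th'_bd] := IH _ _ L'_le le_U'.
have /andP[low_k up_k] := th'_bd kk; rewrite -/(d (ths jm e)) -/(d xb) in low_k up_k.
have L_U_k : L kk <= U kk.
  by apply: le_trans (le_U kk); apply: convex_comb_ge => // j; apply: L_le.
have c_ab : c (ths jm e) <= c xb by rewrite c_xb convex_comb_ge // => j; apply: c_min.
have [x xI [/andP[c_x1 c_x2] /andP[d_x1 d_x2]]] :=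
  tradeoff_window cd (ths_adm jm e) xbI c_ab
    (low := L kk - partial_injection (E :\ e) th' kk)
    (up := U kk - partial_injection (E :\ e) th' kk)
    (ltac:(lra)) (ltac:(lra)) (ltac:(lra)).
have L_l : L l <= c (ths jm e) by rewrite -P_l.
have U_l : c xb <= U l by move: (le_U l); under eq_bigr do rewrite P_l; rewrite c_xb.
exists (fun e' => if e' == e then x else th' e') => [e'|v].
  by case: eqP => [->|].
have rest_eq : partial_injection (E :\ e) (fun e' => if e' == e then x else th' e') =1
               partial_injection (E :\ e) th'.
  by apply: eq_partial_injection => e'; rewrite !inE => /andP[/negbTE -> _].
have [->|vl] := eqVneq v l; first by rewrite P_l eqxx; apply/andP; split; lra.
have [->|vk] := eqVneq v kk; first by rewrite P_k eqxx rest_eq; apply/andP; split; lra.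
rewrite P_off // rest_eq; have := th'_bd v.
by rewrite !(line_injection_other _ jlk vl vk) !subr0.
Qed.

End LeafStep.

Lemma partial_injection_sandwich E (L U : 'I_n -> R) :
  (forall j v, L v <= partial_injection E (ths j) v) ->
  (forall v, \sum_(j < k) w j * partial_injection E (ths j) v <= U v) ->
  exists2 th, admissible th & forall v, L v <= partial_injection E th v <= U v.
Proof. exact: (leaf_edge_ind acyclic sandwiched0 (@sandwiched_leaf)). Qed.

End Sandwich.

End PartialInjection.

Section Pareto.
Variables (R : realType) (n : nat) (A : set ('I_n -> R)).
Hypothesis A_antichain :
  forall x y, A x -> A y -> (forall j, y j <= x j) -> y = x.

Lemma conv_hull_sup : A `<=` conv_hull A.
Proof.
move=> x Ax; exists 1%N, (fun=> 1), (fun=> x); split=> [_|]; first exact: ler01.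
by rewrite big_ord1; split=> //; split=> //; apply/funext => j; rewrite big_ord1 mul1r.
Qed.

Lemma pareto_set_antichain : pareto_set A = A.
Proof.
apply/seteqP; split=> [x []//|x Ax]; split=> // -[y [Ay [yx [j]]]].
by rewrite (A_antichain Ax Ay yx) ltxx.
Qed.

Lemma pareto_set_conv_hull :
  (forall y, conv_hull A y -> exists2 z, A z & forall j, z j <= y j) ->
  pareto_set (conv_hull A) = A.
Proof.
move=> dominated; apply/seteqP; split=> [x [/dominated [z Az zx] x_opt] | x Ax].
  suff -> : x = z by [].
  apply/funext => j; apply/eqP; rewrite eq_le zx andbT leNgt; apply/negP => zj.
  by apply: x_opt; exists z; split; [exact: conv_hull_sup | split => //; exists j].
split; first exact: conv_hull_sup.
move=> [y [/dominated [z Az zy] [yx [j yj]]]].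
have zx : forall i, z i <= x i by move=> i; exact: le_trans (zy i) (yx i).
by move: (zy j); rewrite (A_antichain Ax Az zx) leNgt yj.
Qed.

End Pareto.

Section Network.
Variables (R : realType) (n m : nat) (ends : 'I_m -> 'I_n * 'I_n).
Variables (V : 'I_n -> R) (g b lo hi : 'I_m -> R).
Hypothesis acyclic : acyclic_net ends.
Hypothesis line_tradeoff : forall e, tradeoff_curve (lo e) (hi e)
  (fun x => (line_flow ends V g b e x).1) (fun x => (line_flow ends V g b e x).2).

Local Notation flow := (line_flow ends V g b).
Local Notation admissible := (admissible lo hi).
Local Notation total_injection := (partial_injection ends flow [set: 'I_m]).

Lemma F_thetaP f : F_theta ends V g b lo hi f <->
  exists2 th, admissible th & f = fun e => flow e (th e).
Proof.
split=> [/choice [th f_th] | [th th_adm ->] e].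
  exists th => [e|]; first by rewrite in_itv; case: (f_th e).
  by apply/funext => e; case: (f_th e).
by exists (th e); split => //; move: (th_adm e); rewrite in_itv.
Qed.

Lemma injection_line_flow th :
  injection ends (fun e => flow e (th e)) = total_injection th.
Proof.
apply/funext => v; rewrite /partial_injection (eq_bigl xpredT) => [|e]; last by rewrite inE.
by rewrite big_split /= /injection -!big_mkcond.
Qed.

Lemma P_thetaP p : P_theta ends V g b lo hi p <->
  exists2 th, admissible th & p = total_injection th.
Proof.
split=> [[f [/F_thetaP [th th_adm ->] <-]] | [th th_adm ->]].
  by exists th; rewrite ?injection_line_flow.
exists (fun e => flow e (th e)); rewrite injection_line_flow; split => //.
by apply/F_thetaP; exists th.
Qed.

Lemma P_theta_antichain x y : P_theta ends V g b lo hi x -> P_theta ends V g b lo hi y ->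
  (forall j, y j <= x j) -> y = x.
Proof.
move=> /P_thetaP [thx thx_adm ->] /P_thetaP [thy thy_adm ->] le.
apply/funext/eq_partial_injection => e _.
exact: (partial_injection_le_eq acyclic line_tradeoff thx_adm thy_adm le).
Qed.

Lemma F_theta_injective f f' :
  F_theta ends V g b lo hi f -> F_theta ends V g b lo hi f' ->
  injection ends f = injection ends f' -> f = f'.
Proof.
move=> /F_thetaP [th th_adm ->] /F_thetaP [th' th'_adm ->].
rewrite !injection_line_flow => inj_eq.
have th_eq : {in [set: 'I_m]%SET, th =1 th'}.
  apply: (partial_injection_le_eq acyclic line_tradeoff th'_adm th_adm) => v.
  by rewrite inj_eq.
by apply/funext => e; rewrite th_eq ?inE.
Qed.

Lemma conv_hull_dominated (Plo Phi : 'I_n -> R) y :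
  conv_hull (P_theta ends V g b lo hi `&` P_box Plo Phi) y ->
  exists2 z, (P_theta ends V g b lo hi `&` P_box Plo Phi) z & forall j, z j <= y j.
Proof.
move=> [k [w [xs [w_ge0 [w_sum1 [xsP ->]]]]]].
have /choice [ths ths_xs] : forall i, exists th, admissible th /\ xs i = total_injection th.
  by move=> i; have [th ? ?] := (P_thetaP (xs i)).1 (xsP i).1; exists th.
have [th th_adm th_bd] : exists2 th, admissible th & forall v,
    Plo v <= total_injection th v <= \sum_i w i * xs i v.
  apply: (partial_injection_sandwich acyclic line_tradeoff w_ge0 w_sum1
           (fun i => (ths_xs i).1)).
    by move=> i v; rewrite -(ths_xs i).2; case/andP: ((xsP i).2 v).
  by move=> v; apply: ler_sum => i _; rewrite (ths_xs i).2.
exists (total_injection th) => [|j]; last by case/andP: (th_bd j).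
split; first by apply/P_thetaP; exists th.
move=> j; have /andP[lo_j up_j] := th_bd j; rewrite lo_j (le_trans up_j) //.
by apply: convex_comb_le => // i; case/andP: ((xsP i).2 j).
Qed.

End Network.

Theorem theorem1 (R : realType) (n m : nat) (ends : 'I_m -> 'I_n * 'I_n)
  (V : 'I_n -> R) (g b lo hi : 'I_m -> R) (Plo Phi : 'I_n -> R) :
  is_tree ends ->
  (forall i, 0 < V i) ->
  (forall e, 0 <= g e) -> (forall e, 0 <= b e) ->
  (forall e, - pi <= lo e <= 0) -> (forall e, 0 <= hi e <= pi) ->
  let P := P_theta ends V g b lo hi `&` P_box Plo Phi in
  P !=set0 ->
  (forall e, - crit_angle (g e) (b e) < lo e /\ lo e <= hi e /\
             hi e < crit_angle (g e) (b e)) ->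
  (forall p, P p -> exists! f, F_theta ends V g b lo hi f /\ injection ends f = p)
  /\ P = pareto_set P
  /\ pareto_set P = pareto_set (conv_hull P).
Proof.
move=> [_ acyclic] V_gt0 g_ge0 b_ge0 _ _ P _ angles.
have line_tradeoff e : tradeoff_curve (lo e) (hi e)
    (fun x => (line_flow ends V g b e x).1) (fun x => (line_flow ends V g b e x).2).
  have [clo [_ hic]] := angles e.
  exact: line_flow_tradeoff (V_gt0 _) (V_gt0 _) (g_ge0 e) (b_ge0 e) clo hic.
have P_antichain x y : P x -> P y -> (forall j, y j <= x j) -> y = x.
  by move=> [Px _] [Py _]; apply: (P_theta_antichain acyclic line_tradeoff Px Py).
split; [|split].
- move=> p [[f [Ff <-]] _]; exists f; split=> [//|f' [Ff' f'_inj]].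
  exact: (F_theta_injective acyclic line_tradeoff Ff Ff' (esym f'_inj)).
- by rewrite pareto_set_antichain.
- rewrite pareto_set_antichain ?pareto_set_conv_hull //.
  exact: (conv_hull_dominated acyclic line_tradeoff (Plo := Plo) (Phi := Phi)).
Qed.
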